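(* Let $X$ be a separable Banach space, $X\ne\{0\}$, and let $E_X$, $(e^X_n)$, $Q_X$ be as in the context. Let $(v_k)$ be a bounded block sequence of $(e^X_n)$. If $(Q_X(v_k))$ is weakly null in $X$, then $(v_k)$ is weakly null in $E_X$.
   Context: Given a separable Banach space $X\neq\{0\}$ and a sequence $(x_n)$ (repetitions allowed) in the unit sphere of $X$ which is norm dense in the unit sphere, $E_X$ is the completion of $c_{00}(\mathbb{N})$ under the norm $\|z\|_{E_X}=\sup_{m\in\mathbb{N}}\|\sum_{n=0}^m z(n)x_n\|_X$; $(e^X_n)$ is the standard unit vector basis of $c_{00}(\mathbb{N})$ viewed in $E_X$ (a normalized monotone Schauder basis of $E_X$); $Q_X:E_X\to X$ is the unique bounded linear operator with $Q_X(e^X_n)=x_n$. *)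

From Stdlib Require Import Reals Lra Lia.
Open Scope R_scope.

Record NormedSpace := {
  carrier :> Type;
  vzero : carrier;
  vadd : carrier -> carrier -> carrier;
  vopp : carrier -> carrier;
  vscal : R -> carrier -> carrier;
  vnorm : carrier -> R;
  vadd_assoc : forall x y z, vadd x (vadd y z) = vadd (vadd x y) z;
  vadd_comm : forall x y, vadd x y = vadd y x;
  vadd_zero : forall x, vadd x vzero = x;
  vadd_opp : forall x, vadd x (vopp x) = vzero;
  vscal_one : forall x, vscal 1 x = x;
  vscal_assoc : forall a b x, vscal a (vscal b x) = vscal (a * b) x;
  vscal_distr_l : forall a x y, vscal a (vadd x y) = vadd (vscal a x) (vscal a y);
  vscal_distr_r : forall a b x, vscal (a + b) x = vadd (vscal a x) (vscal b x);
  vnorm_nonneg : forall x, 0 <= vnorm x;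
  vnorm_eq0 : forall x, vnorm x = 0 -> x = vzero;
  vnorm_scal : forall a x, vnorm (vscal a x) = Rabs a * vnorm x;
  vnorm_triangle : forall x y, vnorm (vadd x y) <= vnorm x + vnorm y
}.

Arguments vzero {_}.
Arguments vadd {_}.
Arguments vopp {_}.
Arguments vscal {_}.
Arguments vnorm {_}.

Definition vsub {X : NormedSpace} (x y : X) : X := vadd x (vopp y).

Definition complete (X : NormedSpace) : Prop :=
  forall s : nat -> X,
    (forall eps, 0 < eps -> exists N, forall m n, (N <= m)%nat -> (N <= n)%nat ->
        vnorm (vsub (s m) (s n)) < eps) ->
    exists l : X, forall eps, 0 < eps -> exists N, forall n, (N <= n)%nat ->
        vnorm (vsub (s n) l) < eps.

Definition Banach (X : NormedSpace) : Prop := complete X.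

Definition separable (X : NormedSpace) : Prop :=
  exists d : nat -> X, forall y : X, forall eps, 0 < eps ->
    exists n, vnorm (vsub (d n) y) < eps.

Definition linear_map {X Y : NormedSpace} (T : X -> Y) : Prop :=
  (forall x y, T (vadd x y) = vadd (T x) (T y)) /\
  (forall a x, T (vscal a x) = vscal a (T x)).

Definition bounded_linear_map {X Y : NormedSpace} (T : X -> Y) : Prop :=
  linear_map T /\ exists C, forall x, vnorm (T x) <= C * vnorm x.

Definition bounded_linear_functional {X : NormedSpace} (f : X -> R) : Prop :=
  (forall x y, f (vadd x y) = f x + f y) /\
  (forall a x, f (vscal a x) = a * f x) /\
  (exists C, forall x, Rabs (f x) <= C * vnorm x).

Definition weakly_null {X : NormedSpace} (s : nat -> X) : Prop :=
  forall f : X -> R, bounded_linear_functional f -> Un_cv (fun k => f (s k)) 0.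

Fixpoint vpsum {X : NormedSpace} (g : nat -> X) (m : nat) : X :=
  match m with
  | O => g O
  | S m' => vadd (vpsum g m') (g m)
  end.

Fixpoint Rmax_upto (g : nat -> R) (m : nat) : R :=
  match m with
  | O => g O
  | S m' => Rmax (Rmax_upto g m') (g (S m'))
  end.

Definition dense_in_sphere {X : NormedSpace} (x : nat -> X) : Prop :=
  (forall n, vnorm (x n) = 1) /\
  (forall y : X, vnorm y = 1 -> forall eps, 0 < eps ->
     exists n, vnorm (vsub (x n) y) < eps).

(** (E, u) is (a model of) the completion E_X of c00 under
    ||z||_{E_X} = sup_m || sum_{n<=m} z(n) x_n ||_X, with u n = e^X_n:
    E is Banach; on finitely supported vectors (support in [0,m]) the norm of
    sum_{n<=m} a(n) u_n is the E_X-norm (for such z the sup over all m' equals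
    the max over m' <= m); and span{u_n} (the image of c00) is dense in E. *)
Definition is_EX (X : NormedSpace) (x : nat -> X) (E : NormedSpace) (u : nat -> E) : Prop :=
  Banach E /\
  (forall (a : nat -> R) (m : nat),
     vnorm (vpsum (fun n => vscal (a n) (u n)) m) =
     Rmax_upto (fun m' => vnorm (vpsum (fun n => vscal (a n) (x n)) m')) m) /\
  (forall y : E, forall eps, 0 < eps ->
     exists (a : nat -> R) (m : nat),
       vnorm (vsub y (vpsum (fun n => vscal (a n) (u n)) m)) < eps).

Definition block_sequence {E : NormedSpace} (u : nat -> E) (v : nat -> E) : Prop :=
  exists (p q : nat -> nat) (a : nat -> R),
    (forall k, (p k <= q k)%nat /\ (q k < p (S k))%nat) /\
    (forall k, v k = vpsum (fun n => if andb (Nat.leb (p k) n) (Nat.leb n (q k))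
                                    then vscal (a n) (u n) else vzero) (q k)) /\
    (forall k, v k <> vzero).

Definition bounded_seq {E : NormedSpace} (v : nat -> E) : Prop :=
  exists M, forall k, vnorm (v k) <= M.

From Stdlib Require Import Reals Lra Lia Classical ClassicalEpsilon.
Open Scope R_scope.

(* Fix a functional f on E_X.  First, f is uniformly small on vectors supported far out whose image
   under Q is small: otherwise one could stack J sign-corrected bad blocks one after the other;
   since the E_X-norm only sees partial sums, the stack has norm at most B + J d while f takes
   a value at least J eta on it, contradicting boundedness of f for J large.
   Consequently, for y in X and vectors w_j = c_j e_{n_j} with n_j >= j and c_j x_{n_j} -> y
   (such n_j exist because a dense subset of the sphere, up to sign, meets every neighbourhood
   infinitely often), the limit g(y) of f(w_j) exists and does not depend on the choice of w_j;
   g is a bounded functional on X.  For a bounded block sequence v_k, the vector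
   v_k - w_j is again supported far out with small Q-image, so f(v_k) - g(Q v_k) -> 0,
   and g(Q v_k) -> 0 by assumption. *)

Lemma Rabs_m1 : Rabs (-1) = 1.
Proof. rewrite Rabs_left; lra. Qed.

Section VectorAlgebra.
Variable V : NormedSpace.
Implicit Types x y z w : V.

Lemma vadd_0l x : vadd vzero x = x.
Proof. rewrite vadd_comm; apply vadd_zero. Qed.

Lemma vadd_oppl x : vadd (vopp x) x = vzero.
Proof. rewrite vadd_comm; apply vadd_opp. Qed.

Lemma vadd_idem x : vadd x x = x -> x = vzero.
Proof.
  intro H. rewrite <- (vadd_opp V x). rewrite <- H at 2.
  rewrite <- vadd_assoc, vadd_opp, vadd_zero. reflexivity.
Qed.

Lemma vscal_0 x : vscal 0 x = vzero.
Proof. apply vadd_idem. rewrite <- vscal_distr_r, Rplus_0_r. reflexivity. Qed.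

Lemma vscal_zero (r : R) : vscal r (@vzero V) = vzero.
Proof. apply vadd_idem. rewrite <- vscal_distr_l, vadd_zero. reflexivity. Qed.

Lemma vopp_scal x : vopp x = vscal (-1) x.
Proof.
  assert (Hx : vadd x (vscal (-1) x) = vzero).
  { rewrite <- (vscal_one V x) at 1. rewrite <- vscal_distr_r, Rplus_opp_r. apply vscal_0. }
  rewrite <- (vadd_zero V (vopp x)), <- Hx, vadd_assoc, vadd_oppl. apply vadd_0l.
Qed.

Lemma vopp_vopp x : vopp (vopp x) = x.
Proof.
  rewrite !vopp_scal, vscal_assoc. replace (-1 * -1) with 1 by ring. apply vscal_one.
Qed.

Lemma vopp_add x y : vopp (vadd x y) = vadd (vopp x) (vopp y).
Proof. rewrite !vopp_scal. apply vscal_distr_l. Qed.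

Lemma vscal_opp (r : R) x : vscal r (vopp x) = vopp (vscal r x).
Proof. rewrite !vopp_scal, !vscal_assoc, Rmult_comm. reflexivity. Qed.

Lemma vnorm_zero : vnorm (@vzero V) = 0.
Proof. rewrite <- (vscal_0 vzero), vnorm_scal, Rabs_R0. ring. Qed.

Lemma vnorm_opp x : vnorm (vopp x) = vnorm x.
Proof. rewrite vopp_scal, vnorm_scal, Rabs_m1. ring. Qed.

Lemma vsub_diag x : vsub x x = vzero.
Proof. apply vadd_opp. Qed.

Lemma vsub_eq0 x y : vsub x y = vzero -> x = y.
Proof.
  intro H. rewrite <- (vadd_zero V x), <- (vadd_oppl y), vadd_assoc.
  fold (vsub x y). rewrite H. apply vadd_0l.
Qed.

Lemma vadd_subK x y : vsub (vadd x y) x = y.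
Proof.
  unfold vsub. rewrite vadd_comm, vadd_assoc, vadd_oppl. apply vadd_0l.
Qed.

Lemma vsub_add_add x y z w : vsub (vadd x y) (vadd z w) = vadd (vsub x z) (vsub y w).
Proof.
  unfold vsub. rewrite vopp_add, <- !vadd_assoc. f_equal.
  rewrite !vadd_assoc. f_equal. apply vadd_comm.
Qed.

Lemma vsub_scal (r : R) x y : vsub (vscal r x) (vscal r y) = vscal r (vsub x y).
Proof. unfold vsub. rewrite vscal_distr_l, vscal_opp. reflexivity. Qed.

Lemma vsub_scal_l (r s : R) x : vsub (vscal r x) (vscal s x) = vscal (r - s) x.
Proof.
  unfold vsub. rewrite vopp_scal, vscal_assoc, <- vscal_distr_r. f_equal. ring.
Qed.

Lemma vnorm_sub_sym x y : vnorm (vsub x y) = vnorm (vsub y x).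
Proof.
  rewrite <- vnorm_opp. f_equal. unfold vsub.
  rewrite vopp_add, vopp_vopp, vadd_comm. reflexivity.
Qed.

Lemma vnorm_sub_le x y : vnorm (vsub x y) <= vnorm x + vnorm y.
Proof. rewrite <- (vnorm_opp y). apply vnorm_triangle. Qed.

Lemma vnorm_sub_triangle x y z : vnorm (vsub x z) <= vnorm (vsub x y) + vnorm (vsub y z).
Proof.
  replace (vsub x z) with (vadd (vsub x y) (vsub y z)) by
    (unfold vsub; rewrite <- vadd_assoc, (vadd_assoc _ (vopp y)), vadd_oppl, vadd_0l;
     reflexivity).
  apply vnorm_triangle.
Qed.

Lemma vnorm_sub_gt0 x y : x <> y -> 0 < vnorm (vsub x y).
Proof.
  intro Hxy. destruct (vnorm_nonneg _ (vsub x y)) as [H | H]; [exact H |].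
  exfalso. apply Hxy, vsub_eq0, vnorm_eq0. auto.
Qed.

End VectorAlgebra.

Lemma linear_map_sub (X Y : NormedSpace) (T : X -> Y) x y :
  linear_map T -> T (vsub x y) = vsub (T x) (T y).
Proof.
  intros [T_add T_scal]. unfold vsub. rewrite T_add, !vopp_scal, T_scal. reflexivity.
Qed.

Lemma functional_sub (X : NormedSpace) (f : X -> R) x y :
  bounded_linear_functional f -> f (vsub x y) = f x - f y.
Proof.
  intros [f_add [f_scal _]]. unfold vsub. rewrite f_add, vopp_scal, f_scal. ring.
Qed.

Lemma functional_bound (X : NormedSpace) (f : X -> R) :
  bounded_linear_functional f -> exists C, 0 < C /\ forall z, Rabs (f z) <= C * vnorm z.
Proof.
  intros [_ [_ [C HC]]]. exists (Rabs C + 1). split; [pose proof (Rabs_pos C); lra |].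
  intro z. eapply Rle_trans; [apply HC |].
  pose proof (vnorm_nonneg _ z). pose proof (Rle_abs C). nra.
Qed.

Lemma Un_cv_const (c : R) : Un_cv (fun _ => c) c.
Proof.
  intros eps eps_pos. exists 0%nat. intros.
  unfold R_dist. rewrite Rminus_diag, Rabs_R0. exact eps_pos.
Qed.

Lemma Rabs_sign (r : R) : exists s, Rabs s = 1 /\ Rabs r = s * r.
Proof.
  destruct (Rle_or_lt 0 r).
  - exists 1. rewrite Rabs_R1, Rabs_right by lra. split; [reflexivity | ring].
  - exists (-1). rewrite Rabs_m1, Rabs_left by lra. split; [reflexivity | ring].
Qed.

Lemma div_succ_le (c : R) (i k : nat) :
  0 <= c -> (k <= i)%nat -> c / (INR i + 1) <= c / (INR k + 1).
Proof.
  intros c_ge0 Hki. apply le_INR in Hki. pose proof (pos_INR k). unfold Rdiv.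
  apply Rmult_le_compat_l; [exact c_ge0 |]. apply Rinv_le_contravar; lra.
Qed.

Lemma Rmax_upto_ge (g : nat -> R) m i : (i <= m)%nat -> g i <= Rmax_upto g m.
Proof.
  induction m as [|m IH]; intro Him; simpl.
  - replace i with 0%nat by lia. lra.
  - destruct (Nat.eq_dec i (S m)) as [-> | Hi]; [apply Rmax_r |].
    eapply Rle_trans; [apply IH; lia | apply Rmax_l].
Qed.

Lemma Rmax_upto_le (g : nat -> R) m b : (forall i, (i <= m)%nat -> g i <= b) -> Rmax_upto g m <= b.
Proof.
  induction m as [|m IH]; intro Hg; simpl.
  - apply Hg; lia.
  - apply Rmax_lub; [apply IH; intros; apply Hg | apply Hg]; lia.
Qed.

Lemma vpsum_ext (V : NormedSpace) (g h : nat -> V) m :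
  (forall n, (n <= m)%nat -> g n = h n) -> vpsum g m = vpsum h m.
Proof.
  induction m as [|m IH]; intro Hgh; simpl.
  - apply Hgh; lia.
  - rewrite IH by (intros; apply Hgh; lia). rewrite Hgh by lia. reflexivity.
Qed.

Definition lincomb {V : NormedSpace} (u : nat -> V) (a : nat -> R) (m : nat) : V :=
  vpsum (fun n => vscal (a n) (u n)) m.

Definition single (n : nat) (c : R) : nat -> R := fun i => if Nat.eqb i n then c else 0.

Section LinearCombinations.
Variable V : NormedSpace.
Variable u : nat -> V.

Lemma lincomb_add_scal a b (s : R) m :
  lincomb u (fun n => a n + s * b n) m = vadd (lincomb u a m) (vscal s (lincomb u b m)).
Proof.
  unfold lincomb. induction m as [|m IH]; simpl.
  - rewrite vscal_distr_r, vscal_assoc. reflexivity.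
  - rewrite IH, vscal_distr_l, vscal_distr_r, vscal_assoc, <- !vadd_assoc. f_equal.
    rewrite !vadd_assoc. f_equal. apply vadd_comm.
Qed.

Lemma lincomb_eq0 a m : (forall n, (n <= m)%nat -> a n = 0) -> lincomb u a m = vzero.
Proof.
  unfold lincomb. induction m as [|m IH]; intro Ha; simpl.
  - rewrite Ha by lia. apply vscal_0.
  - rewrite IH by (intros; apply Ha; lia). rewrite Ha by lia. rewrite vscal_0. apply vadd_zero.
Qed.

Lemma lincomb_support a m M :
  (forall n, (m < n)%nat -> a n = 0) -> (m <= M)%nat -> lincomb u a M = lincomb u a m.
Proof.
  intros Ha HmM. induction HmM as [|M HmM IH]; [reflexivity |].
  unfold lincomb in *; simpl. rewrite IH, Ha by lia. rewrite vscal_0. apply vadd_zero.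
Qed.

Lemma single_out n c i : i <> n -> single n c i = 0.
Proof. intro Hin. unfold single. destruct (Nat.eqb_spec i n); [lia | reflexivity]. Qed.

Lemma lincomb_single n c : lincomb u (single n c) n = vscal c (u n).
Proof.
  destruct n as [|n]; unfold lincomb; simpl.
  - reflexivity.
  - fold (lincomb u (single (S n) c) n).
    rewrite lincomb_eq0 by (intros; apply single_out; lia).
    rewrite vadd_0l. unfold single. rewrite Nat.eqb_refl. reflexivity.
Qed.

Lemma linear_map_lincomb (Y : NormedSpace) (T : V -> Y) (y : nat -> Y) a m :
  linear_map T -> (forall n, T (u n) = y n) -> T (lincomb u a m) = lincomb y a m.
Proof.
  intros [T_add T_scal] Tu. unfold lincomb. induction m as [|m IH]; simpl.
  - rewrite T_scal, Tu. reflexivity.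
  - rewrite T_add, IH, T_scal, Tu. reflexivity.
Qed.

Definition tail_span (L : nat) (z : V) : Prop :=
  exists a m, z = lincomb u a m /\ (forall i, (i < L)%nat -> a i = 0) /\
              (forall i, (m < i)%nat -> a i = 0).

Lemma tail_span_single L n c : (L <= n)%nat -> tail_span L (vscal c (u n)).
Proof.
  intro HLn. exists (single n c), n. rewrite lincomb_single.
  split; [reflexivity | split]; intros; apply single_out; lia.
Qed.

Lemma tail_span_add_scal L z1 z2 (s : R) :
  tail_span L z1 -> tail_span L z2 -> tail_span L (vadd z1 (vscal s z2)).
Proof.
  intros [a [m [-> [a_low a_high]]]] [b [k [-> [b_low b_high]]]].
  exists (fun i => a i + s * b i), (Nat.max m k). split; [|split].
  - rewrite lincomb_add_scal, (lincomb_support a m (Nat.max m k)),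
      (lincomb_support b k (Nat.max m k)); auto; lia.
  - intros. rewrite a_low, b_low by lia. ring.
  - intros. rewrite a_high, b_high by lia. ring.
Qed.

Lemma tail_span_scal L (k : R) z : tail_span L z -> tail_span L (vscal k z).
Proof.
  intro Hz.
  replace (vscal k z) with (vadd z (vscal (k - 1) z))
    by (rewrite <- (vscal_one V z) at 1; rewrite <- vscal_distr_r; f_equal; ring).
  apply tail_span_add_scal; assumption.
Qed.

Lemma tail_span_sub L z1 z2 : tail_span L z1 -> tail_span L z2 -> tail_span L (vsub z1 z2).
Proof.
  intros H1 H2. unfold vsub. rewrite vopp_scal. apply tail_span_add_scal; assumption.
Qed.

Lemma tail_span_mono L L' z : (L <= L')%nat -> tail_span L' z -> tail_span L z.
Proof.
  intros HL [a [m [Hz [a_low a_high]]]].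
  exists a, m. split; [exact Hz | split; [intros; apply a_low; lia | exact a_high]].
Qed.

End LinearCombinations.

Lemma block_sequence_tail_span (E : NormedSpace) (e v : nat -> E) :
  block_sequence e v -> forall k, tail_span E e k (v k).
Proof.
  intros [p [q [a [pq [v_def _]]]]] k.
  assert (p_ge : (k <= p k)%nat).
  { clear v_def. induction k as [|k IH]; [lia | destruct (pq k); lia]. }
  exists (fun i => if andb (Nat.leb (p k) i) (Nat.leb i (q k)) then a i else 0), (q k).
  split; [|split].
  - rewrite v_def. apply vpsum_ext. intros n _.
    destruct (andb _ _); [reflexivity | symmetry; apply vscal_0].
  - intros i Hi. destruct (Nat.leb_spec (p k) i); [lia | reflexivity].
  - intros i Hi. destruct (Nat.leb_spec i (q k)); [lia |].
    rewrite Bool.andb_false_r. reflexivity.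
Qed.

Section UnitSphere.
Variable X : NormedSpace.

Lemma unit_collinear (z w : X) (k : R) :
  vnorm z = 1 -> vnorm w = 1 -> w = vscal k z -> w = z \/ w = vopp z.
Proof.
  intros z_unit w_unit Hw.
  assert (Hk : Rabs k = 1) by (rewrite Hw, vnorm_scal, z_unit in w_unit; lra).
  rewrite Hw, vopp_scal. destruct (Rle_or_lt 0 k).
  - left. rewrite Rabs_right in Hk by lra. rewrite Hk. apply vscal_one.
  - right. rewrite Rabs_left in Hk by lra. f_equal. lra.
Qed.

Lemma collinear_of_shift (z w : X) (t k : R) :
  t <> 0 -> vadd z (vscal t w) = vscal k z -> w = vscal ((k - 1) / t) z.
Proof.
  intros t_neq0 Hk.
  assert (Htw : vscal t w = vscal (k - 1) z).
  { rewrite <- vsub_scal_l, vscal_one, <- Hk, vadd_subK. reflexivity. }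
  replace w with (vscal (/ t) (vscal t w)) by
    (rewrite vscal_assoc, Rinv_l, vscal_one by exact t_neq0; reflexivity).
  rewrite Htw, vscal_assoc. f_equal. unfold Rdiv. ring.
Qed.

(* Normalising z + t w for a small t > 0. *)
Lemma unit_perturb (z w : X) :
  vnorm z = 1 -> vnorm w = 1 -> w <> z -> w <> vopp z ->
  forall eps, 0 < eps -> exists z', vnorm z' = 1 /\ vnorm (vsub z' z) < eps /\
    z' <> z /\ z' <> vopp z.
Proof.
  intros z_unit w_unit w_neq w_neq_opp eps eps_pos.
  set (t := Rmin (1/2) (eps/8)).
  assert (t_pos : 0 < t) by (apply Rmin_glb_lt; lra).
  assert (t_half : t <= 1/2) by apply Rmin_l.
  assert (t_eps : t <= eps/8) by apply Rmin_r.
  set (p := vadd z (vscal t w)). set (r := vnorm p).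
  assert (tw_norm : vnorm (vscal t w) = t) by (rewrite vnorm_scal, w_unit, Rabs_right; lra).
  assert (r_le : r <= 1 + t).
  { unfold r, p. eapply Rle_trans; [apply vnorm_triangle |]. rewrite z_unit, tw_norm. lra. }
  assert (r_ge : 1 - t <= r).
  { pose proof (vnorm_sub_le X p (vscal t w)) as H.
    replace (vsub p (vscal t w)) with z in H
      by (unfold p; rewrite vadd_comm, vadd_subK; reflexivity).
    rewrite z_unit, tw_norm in H. fold r in H. lra. }
  assert (r_pos : 0 < r) by lra.
  assert (not_collinear : forall s, Rabs s = 1 -> vscal (/ r) p <> vscal s z).
  { intros s s_abs Hs.
    assert (Hp : p = vscal (r * s) z).
    { rewrite <- vscal_assoc, <- Hs, vscal_assoc, Rinv_r, vscal_one by lra. reflexivity. }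
    apply collinear_of_shift in Hp; [| lra].
    destruct (unit_collinear z w _ z_unit w_unit Hp); contradiction. }
  exists (vscal (/ r) p). split; [|split; [|split]].
  - rewrite vnorm_scal, Rabs_right by (left; apply Rinv_0_lt_compat; lra).
    fold r. field. lra.
  - eapply Rle_lt_trans; [apply (vnorm_sub_triangle X _ p) |].
    rewrite <- (vscal_one X p) at 2. rewrite vsub_scal_l, vnorm_scal. unfold p at 2.
    rewrite vadd_subK, tw_norm. fold r.
    assert (Rabs (/ r - 1) * r = Rabs (1 - r)) as ->.
    { rewrite <- (Rabs_right r) at 2 by lra. rewrite <- Rabs_mult. f_equal. field. lra. }
    destruct (Rle_or_lt r 1); [rewrite Rabs_right | rewrite Rabs_left]; lra.
  - intro Hz. apply (not_collinear 1 Rabs_R1). rewrite vscal_one. exact Hz.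
  - intro Hz. apply (not_collinear (-1)); [apply Rabs_m1 |].
    rewrite <- vopp_scal. exact Hz.
Qed.

Lemma unit_avoid (y w p : X) : vnorm y = 1 -> vnorm w = 1 -> w <> y -> w <> vopp y ->
  forall eps, 0 < eps -> exists y', vnorm y' = 1 /\ vnorm (vsub y' y) < eps /\
    y' <> p /\ y' <> vopp p.
Proof.
  intros y_unit w_unit w_neq w_neq_opp eps eps_pos.
  destruct (classic (y = p \/ y = vopp p)) as [Hy | Hy].
  - destruct (unit_perturb y w y_unit w_unit w_neq w_neq_opp eps eps_pos)
      as [y' [y'_unit [y'_close [y'_neq y'_neq_opp]]]].
    exists y'. repeat split; [assumption .. | |];
      destruct Hy as [-> | ->]; rewrite ?vopp_vopp in *; assumption.
  - exists y. rewrite vsub_diag, vnorm_zero.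
    repeat split; [exact y_unit | lra | |]; intro; apply Hy; auto.
Qed.

Variable x : nat -> X.
Hypothesis x_dense : dense_in_sphere x.

(* Signs are needed: if X is one-dimensional, x may alternate between the two unit vectors. *)
Lemma dense_in_sphere_tail N y : vnorm y = 1 -> forall eps, 0 < eps ->
  exists n s, (N <= n)%nat /\ Rabs s = 1 /\ vnorm (vsub (vscal s (x n)) y) < eps.
Proof.
  destruct x_dense as [x_unit x_approx].
  revert y. induction N as [|N IH]; intros y y_unit eps eps_pos.
  - destruct (x_approx y y_unit eps eps_pos) as [n Hn]. exists n, 1.
    rewrite vscal_one, Rabs_R1. repeat split; [lia | exact Hn].
  - destruct (classic (exists w, vnorm w = 1 /\ w <> y /\ w <> vopp y))
      as [[w [w_unit [w_neq w_neq_opp]]] | one_dim].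
    (* Move y off +-x_N, so that an approximation of the moved point cannot use the index N. *)
    + destruct (unit_avoid y w (x N) y_unit w_unit w_neq w_neq_opp (eps/2))
        as [y' [y'_unit [y'_close [y'_neq y'_neq_opp]]]]; [lra |].
      set (rho := Rmin (vnorm (vsub (x N) y')) (vnorm (vsub (vopp (x N)) y'))).
      assert (rho_pos : 0 < rho) by (apply Rmin_glb_lt; apply vnorm_sub_gt0; auto).
      destruct (IH y' y'_unit (Rmin (eps/2) rho)) as [n [s [Hn [s_abs Hs]]]];
        [apply Rmin_glb_lt; lra |].
      exists n, s. split; [|split; [exact s_abs |]].
      * destruct (Nat.eq_dec n N) as [-> | ]; [exfalso | lia].
        assert (far : rho <= vnorm (vsub (vscal s (x N)) y')).
        { destruct (Rle_or_lt 0 s).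
          - rewrite Rabs_right in s_abs by lra. rewrite s_abs, vscal_one. apply Rmin_l.
          - rewrite Rabs_left in s_abs by lra. replace s with (-1) by lra.
            rewrite <- vopp_scal. apply Rmin_r. }
        pose proof (Rmin_r (eps/2) rho). lra.
      * eapply Rle_lt_trans; [apply (vnorm_sub_triangle X _ y') |].
        pose proof (Rmin_l (eps/2) rho). lra.
    + assert (HxSN : x (S N) = y \/ x (S N) = vopp y).
      { apply NNPP. intro H. apply one_dim. exists (x (S N)). split; [apply x_unit | tauto]. }
      destruct HxSN as [Hx | Hx].
      * exists (S N), 1. rewrite vscal_one, Hx, vsub_diag, vnorm_zero, Rabs_R1.
        repeat split; [lia | lra].
      * exists (S N), (-1).
        rewrite Hx, <- vopp_scal, vopp_vopp, vsub_diag, vnorm_zero, Rabs_m1.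
        repeat split; [lia | lra].
Qed.

Lemma dense_in_sphere_approx y N eps : 0 < eps ->
  exists n c, (N <= n)%nat /\ Rabs c = vnorm y /\ vnorm (vsub (vscal c (x n)) y) <= eps * vnorm y.
Proof.
  intro eps_pos. destruct (vnorm_nonneg _ y) as [y_pos | y_zero].
  - set (r := vnorm y) in *.
    assert (unit : vnorm (vscal (/ r) y) = 1).
    { rewrite vnorm_scal, Rabs_right by (left; apply Rinv_0_lt_compat; lra). fold r. field. lra. }
    destruct (dense_in_sphere_tail N _ unit eps eps_pos) as [n [s [Hn [s_abs Hs]]]].
    exists n, (r * s). split; [exact Hn | split].
    + rewrite Rabs_mult, s_abs, Rabs_right by lra. ring.
    + replace y with (vscal r (vscal (/ r) y))
        by (rewrite vscal_assoc, Rinv_r, vscal_one by lra; reflexivity).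
      rewrite <- vscal_assoc, vsub_scal, vnorm_scal, Rabs_right by lra.
      rewrite Rmult_comm. apply Rmult_le_compat_r; lra.
  - symmetry in y_zero. pose proof (vnorm_eq0 _ _ y_zero) as ->.
    exists N, 0. rewrite Rabs_R0, vscal_0, vsub_diag, vnorm_zero. repeat split; lra || lia.
Qed.

End UnitSphere.

Section FunctionalsOnEX.
Variables (X E : NormedSpace) (x : nat -> X) (e : nat -> E).
Hypothesis vnorm_lincomb :
  forall a m, vnorm (lincomb e a m) = Rmax_upto (fun m' => vnorm (lincomb x a m')) m.
Variable Q : E -> X.
Hypothesis Q_linear : linear_map Q.
Hypothesis Q_basis : forall n, Q (e n) = x n.

Lemma Q_lincomb a m : Q (lincomb e a m) = lincomb x a m.
Proof. apply linear_map_lincomb; assumption. Qed.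

Lemma vnorm_partial_le a m m' :
  (forall i, (m < i)%nat -> a i = 0) -> vnorm (lincomb x a m') <= vnorm (lincomb e a m).
Proof.
  intro a_high. rewrite vnorm_lincomb. destruct (Compare_dec.le_lt_dec m' m).
  - apply (Rmax_upto_ge (fun i => vnorm (lincomb x a i))). assumption.
  - rewrite (lincomb_support _ x a m m') by (assumption || lia).
    apply (Rmax_upto_ge (fun i => vnorm (lincomb x a i))). lia.
Qed.

Lemma vnorm_Q_tail_le L z : tail_span E e L z -> vnorm (Q z) <= vnorm z.
Proof. intros [a [m [-> [_ a_high]]]]. rewrite Q_lincomb. apply vnorm_partial_le; assumption. Qed.

Lemma vnorm_scal_basis c n : vnorm (vscal c (e n)) = vnorm (vscal c (x n)).
Proof.
  rewrite <- (lincomb_single _ e), <- (lincomb_single _ x), vnorm_lincomb.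
  apply Rle_antisym.
  - apply Rmax_upto_le. intros i Hi. destruct (Nat.eq_dec i n) as [-> | Hin]; [lra |].
    rewrite lincomb_eq0 by (intros; apply single_out; lia).
    rewrite vnorm_zero. apply vnorm_nonneg.
  - apply (Rmax_upto_ge (fun i => vnorm (lincomb x (single n c) i))). lia.
Qed.

Variable f : E -> R.
Hypothesis f_functional : bounded_linear_functional f.

Section BadBlocks.
Variables B d eta : R.
Hypothesis B_ge0 : 0 <= B.
Hypothesis bad_block : forall L, exists z, tail_span E e L z /\ vnorm z <= B /\
  vnorm (Q z) <= d /\ eta < Rabs (f z).

Lemma bad_block_sums J : exists c m, (forall i, (m < i)%nat -> c i = 0) /\
  (forall m', vnorm (lincomb x c m') <= B + INR J * d) /\
  vnorm (lincomb x c m) <= INR J * d /\ INR J * eta <= f (lincomb e c m).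
Proof.
  destruct f_functional as [f_add [f_scal _]].
  induction J as [|J IH].
  - exists (fun _ => 0), 0%nat. simpl. split; [intros; reflexivity |].
    assert (zero : forall (V : NormedSpace) (u : nat -> V) m, lincomb u (fun _ => 0) m = vzero)
      by (intros; apply lincomb_eq0; reflexivity).
    rewrite !zero, vnorm_zero, <- (vscal_0 E vzero), f_scal.
    split; [intro m'; rewrite zero, vnorm_zero |]; lra.
  - destruct IH as [c [m [c_high [c_partial [c_full c_f]]]]].
    destruct (bad_block (S m)) as [z [[a [ma [-> [a_low a_high]]]] [z_norm [z_Q z_f]]]].
    rewrite Q_lincomb in z_Q.
    (* Append the next bad block with the sign s for which f grows by |f a| > eta. *)
    destruct (Rabs_sign (f (lincomb e a ma))) as [s [s_abs s_f]].
    assert (d_ge0 : 0 <= d) by (pose proof (vnorm_nonneg _ (lincomb x a ma)); lra).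
    assert (above_m : forall (V : NormedSpace) (u : nat -> V) m', (m <= m')%nat ->
      lincomb u (fun i => c i + s * a i) m' = vadd (lincomb u c m) (vscal s (lincomb u a m'))).
    { intros. rewrite lincomb_add_scal, (lincomb_support _ _ c m) by assumption. reflexivity. }
    assert (a_full : forall (V : NormedSpace) (u : nat -> V),
      lincomb u a (Nat.max m ma) = lincomb u a ma) by (intros; apply lincomb_support; auto; lia).
    exists (fun i => c i + s * a i), (Nat.max m ma). rewrite S_INR. split; [|split; [|split]].
    + intros i Hi. rewrite c_high, a_high by lia. ring.
    + intro m'. destruct (Compare_dec.le_lt_dec m' m).
      * rewrite lincomb_add_scal, (lincomb_eq0 _ _ a m') by (intros; apply a_low; lia).
        rewrite vscal_zero, vadd_zero. specialize (c_partial m'). lra.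
      * rewrite above_m by lia. eapply Rle_trans; [apply vnorm_triangle |].
        rewrite vnorm_scal, s_abs. pose proof (vnorm_partial_le a ma m' a_high). lra.
    + rewrite above_m, a_full by lia. eapply Rle_trans; [apply vnorm_triangle |].
      rewrite vnorm_scal, s_abs. lra.
    + rewrite above_m, a_full, f_add, f_scal by lia. lra.
Qed.

End BadBlocks.

Lemma tail_functional_uniform B eta : 0 <= B -> 0 < eta ->
  exists L d, 0 < d /\ forall z, tail_span E e L z -> vnorm z <= B -> vnorm (Q z) <= d ->
    Rabs (f z) <= eta.
Proof.
  intros B_ge0 eta_pos. destruct (functional_bound E f f_functional) as [C [C_pos f_bound]].
  set (d := eta / (2 * C)).
  assert (d_pos : 0 < d) by (apply Rdiv_lt_0_compat; lra).
  apply NNPP. intro no_L.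
  assert (bad : forall L, exists z, tail_span E e L z /\ vnorm z <= B /\
                                    vnorm (Q z) <= d /\ eta < Rabs (f z)).
  { intro L. apply NNPP. intro H. apply no_L. exists L, d. split; [exact d_pos |].
    intros z Hz z_norm z_Q. apply Rnot_lt_le. intro. apply H. exists z. auto. }
  destruct (INR_unbounded (2 * C * B / eta)) as [J HJ].
  destruct (bad_block_sums B d eta B_ge0 bad J) as [c [m [_ [c_partial [_ c_f]]]]].
  assert (c_norm : vnorm (lincomb e c m) <= B + INR J * d).
  { rewrite vnorm_lincomb. apply Rmax_upto_le. intros. apply c_partial. }
  assert (f_le : f (lincomb e c m) <= C * B + INR J * eta / 2).
  { replace (C * B + INR J * eta / 2) with (C * (B + INR J * d)) by (unfold d; field; lra).
    eapply Rle_trans; [apply Rle_abs |]. eapply Rle_trans; [apply f_bound |].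
    apply Rmult_le_compat_l; lra. }
  assert (J_large : 2 * C * B < INR J * eta).
  { apply (Rmult_lt_compat_r eta) in HJ; [| exact eta_pos].
    unfold Rdiv in HJ. rewrite Rmult_assoc, Rinv_l, Rmult_1_r in HJ by lra. lra. }
  lra.
Qed.

Lemma tail_functional_small K eps : 0 < eps ->
  exists N, forall z j, (N <= j)%nat -> tail_span E e j z -> vnorm z <= K ->
    vnorm (Q z) <= K / (INR j + 1) -> Rabs (f z) < eps.
Proof.
  intro eps_pos.
  destruct (tail_functional_uniform (Rabs K) (eps/2)) as [L [d [d_pos small]]];
    [apply Rabs_pos | lra |].
  destruct (INR_unbounded (Rabs K / d)) as [n Hn].
  exists (Nat.max n L). intros z j Hj z_tail z_norm z_Q.
  apply Rle_lt_trans with (eps/2); [| lra].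
  apply small.
  - apply (tail_span_mono _ _ _ j); [lia | exact z_tail].
  - eapply Rle_trans; [exact z_norm | apply Rle_abs].
  - eapply Rle_trans; [exact z_Q |].
    assert (n_le_j : INR n <= INR j) by (apply le_INR; lia).
    apply (Rmult_lt_compat_r d) in Hn; [| exact d_pos].
    unfold Rdiv in *. rewrite Rmult_assoc, Rinv_l, Rmult_1_r in Hn by lra.
    apply (Rmult_le_reg_r (INR j + 1)); [pose proof (pos_INR j); lra |].
    rewrite Rmult_assoc, Rinv_l, Rmult_1_r by (pose proof (pos_INR j); lra).
    pose proof (Rle_abs K). nra.
Qed.

Definition tail_approx (y : X) (w : nat -> E) : Prop :=
  exists K, forall j, tail_span E e j (w j) /\ vnorm (w j) <= K /\
                      vnorm (vsub (Q (w j)) y) <= K / (INR j + 1).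

Lemma tail_approx_add y z w w' : tail_approx y w -> tail_approx z w' ->
  tail_approx (vadd y z) (fun j => vadd (w j) (w' j)).
Proof.
  intros [K Hw] [K' Hw']. exists (K + K'). intro j.
  destruct (Hw j) as [w_tail [w_norm w_Q]], (Hw' j) as [w'_tail [w'_norm w'_Q]].
  split; [|split].
  - rewrite <- (vscal_one E (w' j)). apply tail_span_add_scal; assumption.
  - eapply Rle_trans; [apply vnorm_triangle | lra].
  - destruct Q_linear as [Q_add _]. rewrite Q_add, vsub_add_add.
    eapply Rle_trans; [apply vnorm_triangle |]. unfold Rdiv in *. lra.
Qed.

Lemma tail_approx_scal k y w : tail_approx y w -> tail_approx (vscal k y) (fun j => vscal k (w j)).
Proof.
  intros [K Hw]. exists (Rabs k * K). intro j.
  destruct (Hw j) as [w_tail [w_norm w_Q]]. pose proof (Rabs_pos k) as k_abs.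
  split; [|split].
  - apply tail_span_scal. exact w_tail.
  - rewrite vnorm_scal. apply Rmult_le_compat_l; assumption.
  - destruct Q_linear as [_ Q_scal]. rewrite Q_scal, vsub_scal, vnorm_scal.
    unfold Rdiv in *. rewrite Rmult_assoc. apply Rmult_le_compat_l; assumption.
Qed.

Lemma tail_approx_close y w w' : tail_approx y w -> tail_approx y w' ->
  forall eps, 0 < eps -> exists N, forall i j, (N <= i)%nat -> (N <= j)%nat ->
    Rabs (f (w i) - f (w' j)) < eps.
Proof.
  intros [K Hw] [K' Hw'] eps eps_pos.
  destruct (tail_functional_small (K + K') eps eps_pos) as [N small].
  exists N. intros i j Hi Hj. rewrite <- functional_sub by assumption.
  destruct (Hw i) as [wi_tail [wi_norm wi_Q]], (Hw' j) as [wj_tail [wj_norm wj_Q]].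
  assert (K_ge0 : 0 <= K) by (pose proof (vnorm_nonneg _ (w i)); lra).
  assert (K'_ge0 : 0 <= K') by (pose proof (vnorm_nonneg _ (w' j)); lra).
  apply (small _ (Nat.min i j)); [lia | | |].
  - apply tail_span_sub; eapply tail_span_mono; [| exact wi_tail | | exact wj_tail]; lia.
  - eapply Rle_trans; [apply vnorm_sub_le | lra].
  - rewrite linear_map_sub by assumption.
    eapply Rle_trans; [apply (vnorm_sub_triangle X _ y) |]. rewrite (vnorm_sub_sym X y).
    pose proof (div_succ_le K i (Nat.min i j) K_ge0 ltac:(lia)).
    pose proof (div_succ_le K' j (Nat.min i j) K'_ge0 ltac:(lia)).
    unfold Rdiv in *. lra.
Qed.

Lemma tail_approx_limit y w w' l : tail_approx y w -> tail_approx y w' ->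
  Un_cv (fun j => f (w' j)) l -> Un_cv (fun j => f (w j)) l.
Proof.
  intros Hw Hw' w'_lim eps eps_pos.
  destruct (tail_approx_close y w w' Hw Hw' (eps/2)) as [N close]; [lra |].
  destruct (w'_lim (eps/2)) as [N' lim]; [lra |].
  exists N. intros j Hj. unfold R_dist in *.
  specialize (close j (Nat.max N N') Hj (Nat.le_max_l _ _)).
  specialize (lim (Nat.max N N') (Nat.le_max_r _ _)).
  replace (f (w j) - l) with ((f (w j) - f (w' (Nat.max N N'))) + (f (w' (Nat.max N N')) - l))
    by ring.
  eapply Rle_lt_trans; [apply Rabs_triang | lra].
Qed.

Hypothesis x_dense : dense_in_sphere x.

Lemma basis_approx_exists y : exists w, tail_approx y w /\ forall j,
  vnorm (w j) <= vnorm y /\ vnorm (vsub (Q (w j)) y) <= vnorm y / (INR j + 1).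
Proof.
  assert (step : forall j, exists p : nat * R, (j <= fst p)%nat /\ Rabs (snd p) = vnorm y /\
    vnorm (vsub (vscal (snd p) (x (fst p))) y) <= vnorm y / (INR j + 1)).
  { intro j. destruct (dense_in_sphere_approx X x x_dense y j (/ (INR j + 1)))
      as [n [c [Hn [c_abs Hc]]]]; [apply Rinv_0_lt_compat; pose proof (pos_INR j); lra |].
    exists (n, c). simpl. unfold Rdiv. rewrite Rmult_comm. auto. }
  destruct (choice _ step) as [p Hp].
  set (w := fun j => vscal (snd (p j)) (e (fst (p j)))).
  assert (w_norm : forall j, vnorm (w j) = vnorm y).
  { intro j. destruct (Hp j) as [_ [c_abs _]].
    unfold w. rewrite vnorm_scal_basis, vnorm_scal, (proj1 x_dense), c_abs. ring. }
  assert (w_Q : forall j, vnorm (vsub (Q (w j)) y) <= vnorm y / (INR j + 1)).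
  { intro j. destruct Q_linear as [_ Q_scal]. unfold w. rewrite Q_scal, Q_basis. apply Hp. }
  exists w. split.
  - exists (vnorm y). intro j. rewrite w_norm. repeat split; [| lra | apply w_Q].
    apply tail_span_single, Hp.
  - intro j. rewrite w_norm. split; [lra | apply w_Q].
Qed.

Lemma limit_functional : exists g : X -> R, bounded_linear_functional g /\
  forall y w, tail_approx y w -> Un_cv (fun j => f (w j)) (g y).
Proof.
  assert (lim : forall y, exists l, forall w, tail_approx y w -> Un_cv (fun j => f (w j)) l).
  { intro y. destruct (basis_approx_exists y) as [w [Hw _]].
    destruct (R_complete (fun j => f (w j))) as [l Hl].
    { intros eps eps_pos. destruct (tail_approx_close y w w Hw Hw eps eps_pos) as [N HN].
      exists N. intros. apply HN; assumption. }
    exists l. intros w' Hw'. exact (tail_approx_limit y w' w l Hw' Hw Hl). }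
  destruct (choice _ lim) as [g g_lim]. exists g. split; [|exact g_lim].
  destruct f_functional as [f_add [f_scal _]].
  split; [|split].
  - intros y z.
    destruct (basis_approx_exists y) as [w [Hw _]], (basis_approx_exists z) as [w' [Hw' _]].
    apply (UL_sequence (fun j => f (vadd (w j) (w' j)))).
    + apply g_lim, tail_approx_add; assumption.
    + eapply Un_cv_ext; [intro j; symmetry; apply f_add |].
      apply CV_plus; apply g_lim; assumption.
  - intros k y. destruct (basis_approx_exists y) as [w [Hw _]].
    apply (UL_sequence (fun j => f (vscal k (w j)))).
    + apply g_lim, tail_approx_scal; assumption.
    + eapply Un_cv_ext; [intro j; symmetry; apply f_scal |].
      apply CV_mult; [apply Un_cv_const | apply g_lim; assumption].
  - destruct (functional_bound E f f_functional) as [C [C_pos f_bound]].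
    exists C. intro y. destruct (basis_approx_exists y) as [w [Hw w_norm]].
    apply (Rle_cv_lim (Un := fun j => Rabs (f (w j))) (Vn := fun _ => C * vnorm y)).
    + intro j. eapply Rle_trans; [apply f_bound |]. apply Rmult_le_compat_l; [lra | apply w_norm].
    + apply cv_cvabs, g_lim, Hw.
    + apply Un_cv_const.
Qed.

Lemma functional_defect_null (g : X -> R) (v : nat -> E) M :
  (forall y w, tail_approx y w -> Un_cv (fun j => f (w j)) (g y)) ->
  (forall k, tail_span E e k (v k)) -> (forall k, vnorm (v k) <= M) ->
  Un_cv (fun k => f (v k) - g (Q (v k))) 0.
Proof.
  intros g_lim v_tail v_bdd eps eps_pos.
  assert (M_ge0 : 0 <= M) by (pose proof (vnorm_nonneg _ (v 0%nat)); pose proof (v_bdd 0%nat); lra).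
  destruct (tail_functional_small (2 * M) (eps/2)) as [N small]; [lra |].
  exists N. intros k Hk. unfold R_dist. rewrite Rminus_0_r.
  set (y := Q (v k)).
  assert (y_norm : vnorm y <= M)
    by (eapply Rle_trans; [apply (vnorm_Q_tail_le k), v_tail | apply v_bdd]).
  destruct (basis_approx_exists y) as [w [w_approx w_bounds]].
  destruct (g_lim y w w_approx (eps/2)) as [J HJ]; [lra |].
  set (j := Nat.max J k).
  destruct (w_bounds j) as [w_norm w_Q].
  assert (w_tail : tail_span E e j (w j)) by (destruct w_approx as [K Hw]; apply Hw).
  assert (defect : Rabs (f (vsub (v k) (w j))) < eps/2).
  { apply (small _ k Hk).
    - apply tail_span_sub; [apply v_tail | eapply tail_span_mono; [| exact w_tail]; lia].
    - eapply Rle_trans; [apply vnorm_sub_le |]. pose proof (v_bdd k). lra.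
    - rewrite linear_map_sub, vnorm_sub_sym by assumption. fold y.
      eapply Rle_trans; [exact w_Q |].
      eapply Rle_trans; [apply (div_succ_le _ j k (vnorm_nonneg _ y)); lia |].
      unfold Rdiv. apply Rmult_le_compat_r; [| lra].
      left. apply Rinv_0_lt_compat. pose proof (pos_INR k). lra. }
  specialize (HJ j (Nat.le_max_l _ _)). unfold R_dist in HJ.
  rewrite functional_sub in defect by assumption.
  replace (f (v k) - g y) with ((f (v k) - f (w j)) + (f (w j) - g y)) by ring.
  eapply Rle_lt_trans; [apply Rabs_triang | lra].
Qed.

End FunctionalsOnEX.

Theorem proposition18
  (X : NormedSpace) (HX : Banach X) (Hsep : separable X)
  (Hnz : exists y : X, y <> vzero)
  (x : nat -> X) (Hx : dense_in_sphere x)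
  (E : NormedSpace) (e : nat -> E) (HE : is_EX X x E e)
  (Q : E -> X) (HQ : bounded_linear_map Q) (HQe : forall n, Q (e n) = x n)
  (v : nat -> E) (Hblock : block_sequence e v) (Hbdd : bounded_seq v) :
  weakly_null (fun k => Q (v k)) -> weakly_null v.
Proof.
  intros Qv_null f Hf.
  destruct HE as [_ [Hnorm _]]. destruct HQ as [Q_linear _]. destruct Hbdd as [M v_bdd].
  destruct (limit_functional X E x e Hnorm Q Q_linear HQe f Hf Hx) as [g [Hg g_lim]].
  pose proof (functional_defect_null X E x e Hnorm Q Q_linear HQe f Hf Hx g v M g_lim
                (block_sequence_tail_span E e v Hblock) v_bdd) as defect.
  pose proof (CV_plus _ _ _ _ defect (Qv_null g Hg)) as sum.
  rewrite Rplus_0_r in sum.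
  eapply Un_cv_ext; [| exact sum]. intro k. simpl. ring.
Qed.
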